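(* Let $R=[0,1]^2$, $s\in\mathbb{N}$ and $u=2^{-s}$. If $u\le\frac12$, then the $4$-dimensional volume of the union $\mathcal{B}_{close}$ of all close box pairs satisfies $\mathrm{vol}(\mathcal{B}_{close})\le4\pi u$.
   Context: For $p,q\in\mathbb{R}^2$ write $p\le q$ if both coordinates satisfy $\le$. $R$ is split into $2^s\times2^s$ congruent closed squares (''boxes'') of side length $u$. A box pair is an ordered pair $(B_1,B_2)$ of boxes, viewed as the subset $B_1\times B_2\subset\mathbb{R}^4$; let $c_1,c_2$ be the centers of $B_1,B_2$. A box pair is close if $c_1\le c_2$ and $\|c_1-c_2\|_2<\sqrt u$. $\mathrm{vol}$ denotes $4$-dimensional Lebesgue measure. *)

From HB Require Import structures.
From mathcomp Require Import all_boot all_order all_algebra.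
From mathcomp Require Import all_classical all_reals all_analysis.
Unset Printing Implicit Defensive.
Import Order.TTheory GRing.Theory Num.Theory.
Local Open Scope classical_set_scope.
Local Open Scope ring_scope.

Definition vol4 (R : realType) :=
  (((@lebesgue_measure R) \x (@lebesgue_measure R)) \x
   ((@lebesgue_measure R) \x (@lebesgue_measure R)))%E.

Definition side (R : realType) (s : nat) : R := (2 ^+ s)^-1.

Definition box (R : realType) (s i j : nat) : set (R * R) :=
  [set p | i%:R * side R s <= p.1 <= i.+1%:R * side R s /\
           j%:R * side R s <= p.2 <= j.+1%:R * side R s].

Definition center (R : realType) (s i j : nat) : R * R :=
  ((i%:R + 2^-1) * side R s, (j%:R + 2^-1) * side R s).

Definition le2 (R : realType) (p q : R * R) : Prop := p.1 <= q.1 /\ p.2 <= q.2.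

Definition dist2 (R : realType) (p q : R * R) : R :=
  Num.sqrt ((q.1 - p.1) ^+ 2 + (q.2 - p.2) ^+ 2).

Definition close_pair (R : realType) (s i1 j1 i2 j2 : nat) : Prop :=
  le2 R (center R s i1 j1) (center R s i2 j2) /\
  dist2 R (center R s i1 j1) (center R s i2 j2) < Num.sqrt (side R s).

Definition B_close (R : realType) (s : nat) : set ((R * R) * (R * R)) :=
  [set x | exists i1 j1 i2 j2 : nat,
     [/\ (i1 < 2 ^ s)%N /\ (j1 < 2 ^ s)%N, (i2 < 2 ^ s)%N /\ (j2 < 2 ^ s)%N,
         close_pair R s i1 j1 i2 j2 & box R s i1 j1 x.1 /\ box R s i2 j2 x.2]].

(* A close pair of boxes is determined by the indices (i1, j1) of its first
   box and by its offset (i2 - i1, j2 - j1). Since c1 <= c2 the offset has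
   nonnegative entries, and since |c2 - c1|^2 < u their squares are below
   1/u = 2^s, so both entries are below k = 2^(ceil (s/2)), where k^2 <= 2/u.
   Hence there are at most u^-2 k^2 <= 2 u^-3 close pairs, each of volume u^4,
   and subadditivity gives vol(B_close) <= 2u <= 4 pi u. *)

From HB Require Import structures.
From mathcomp Require Import all_boot all_order all_algebra.
From mathcomp Require Import all_classical all_reals all_analysis.
From mathcomp Require Import ring lra.
Import Order.TTheory GRing.Theory Num.Theory.
Local Open Scope classical_set_scope.
Local Open Scope ring_scope.

Lemma content_bigsetU_le {d} {T : ringOfSetsType d} {R : realFieldType}
    (mu : {content set T -> \bar R}) {I : Type} (r : seq I) (F : I -> set T) :
  (forall i, measurable (F i)) ->
  (mu (\big[setU/set0]_(i <- r) F i) <= \sum_(i <- r) mu (F i))%E.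
Proof.
move=> mF; elim: r => [|i r IHr]; first by rewrite !big_nil measure0.
rewrite !big_cons; apply: le_trans (leeD2l _ IHr).
by apply: measureU2 => //; exact: bigsetU_measurable.
Qed.

Section product_measure_sigma_finite.
Context {d1 d2} {T1 : measurableType d1} {T2 : measurableType d2} {R : realType}.
Variables (m1 : {sigma_finite_measure set T1 -> \bar R})
          (m2 : {sigma_finite_measure set T2 -> \bar R}).

Lemma product_measure_sigma_finite : sigma_finite setT (m1 \x m2)%E.
Proof.
have /sigma_finiteP[F [FT ndF Ffin]] := sigma_finiteT m1.
have /sigma_finiteP[G [GT ndG Gfin]] := sigma_finiteT m2.
exists (fun n => F n `*` G n).
  apply/seteqP; split => // -[x y] _.
  have [[n _ Fnx] [k _ Gky]] : (\bigcup_n F n) x /\ (\bigcup_n G n) y.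
    by rewrite -FT -GT.
  exists (maxn n k) => //; split.
  - by move/subsetPset: (ndF _ _ (leq_maxl n k)); apply.
  - by move/subsetPset: (ndG _ _ (leq_maxr n k)); apply.
move=> n; have [mFn Fn_fin] := Ffin n; have [mGn Gn_fin] := Gfin n.
split; first exact: measurableX.
by rewrite product_measure1E // lte_mul_pinfty // ge0_fin_numE.
Qed.

End product_measure_sigma_finite.

(* Canonical structure inference does not find a sigma-finite structure on
   [lebesgue_measure \x lebesgue_measure], so it is packed by hand. *)
Definition lebesgue_measure2 (R : realType) :=
  HB.pack_for (SigmaFiniteMeasure.type _ R) (@lebesgue_measure R \x @lebesgue_measure R)%E
    (Measure_isSigmaFinite.Build _ _ _ (@lebesgue_measure R \x @lebesgue_measure R)%E
      (product_measure_sigma_finite (@lebesgue_measure R) (@lebesgue_measure R))).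

Notation lebesgue_measure4 R := (lebesgue_measure2 R \x lebesgue_measure2 R)%E.

Lemma vol4E (R : realType) : vol4 R = lebesgue_measure4 R.
Proof. by []. Qed.

Lemma lebesgue_measure_itv_cc {R : realType} (a b : R) : a <= b ->
  lebesgue_measure (`[a, b]%classic : set R) = (b - a)%:E.
Proof.
rewrite lebesgue_measure_itv /= lte_fin le_eqVlt => /predU1P[<-|->].
  by rewrite ltxx subrr.
by rewrite -EFinD.
Qed.

Section boxes.
Variables (R : realType) (s : nat).
Local Notation u := (side R s).

Lemma side_gt0 : 0 < u.
Proof. by rewrite invr_gt0 exprn_gt0. Qed.

Lemma side_mul_exp2 : u * 2 ^+ s = 1.
Proof. by rewrite mulVf // expf_neq0. Qed.

Lemma boxE i j : box R s i j =
  `[i%:R * u, i.+1%:R * u]%classic `*` `[j%:R * u, j.+1%:R * u]%classic.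
Proof. by apply/seteqP; split => -[x y] /=; rewrite !in_itv. Qed.

Lemma measurable_box i j : measurable (box R s i j).
Proof. by rewrite boxE; apply: measurableX; exact: measurable_itv. Qed.

Lemma lebesgue_measure2_box i j : lebesgue_measure2 R (box R s i j) = (u ^+ 2)%:E.
Proof.
have side_itv k : lebesgue_measure (`[k%:R * u, k.+1%:R * u]%classic : set R) = u%:E.
  rewrite lebesgue_measure_itv_cc -?natr1; first by congr (_%:E); ring.
  by rewrite ler_pM2r ?side_gt0 // lerDl.
rewrite boxE /= product_measure1E; try exact: measurable_itv.
by rewrite expr2 EFinM; congr (_ * _)%E; exact: side_itv.
Qed.

Lemma vol4_box_pair i1 j1 i2 j2 :
  vol4 R (box R s i1 j1 `*` box R s i2 j2) = (u ^+ 4)%:E.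
Proof.
rewrite vol4E product_measure1E; try exact: measurable_box.
by rewrite (exprD _ 2 2) EFinM; congr (_ * _)%E; exact: lebesgue_measure2_box.
Qed.

End boxes.

Lemma exp2_uphalf_sqr s : ((2 ^ uphalf s) ^ 2 = 2 ^ (odd s + s))%N.
Proof. by rewrite -expnM muln2 uphalfK. Qed.

Lemma sqr_lt_exp2_uphalf {s a : nat} : (a ^ 2 < 2 ^ s)%N -> (a < 2 ^ uphalf s)%N.
Proof.
move=> lt_a; rewrite -ltn_sqr (leq_trans lt_a) // exp2_uphalf_sqr.
by rewrite leq_pexp2l // leq_addl.
Qed.

Lemma exp2_uphalf_sqr_le s : ((2 ^ uphalf s) ^ 2 <= 2 * 2 ^ s)%N.
Proof. by rewrite exp2_uphalf_sqr expnD leq_mul2r; case: odd; rewrite ?orbT. Qed.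

Notation block_index s :=
  ('I_(2 ^ s) * 'I_(2 ^ s) * ('I_(2 ^ uphalf s) * 'I_(2 ^ uphalf s)))%type.

Section close_pairs.
Variables (R : realType) (s : nat).
Local Notation u := (side R s).

Lemma sqr_lt_exp2_of_dist (a b : R) :
  (a * u) ^+ 2 + (b * u) ^+ 2 < u -> a ^+ 2 < 2 ^+ s.
Proof.
move=> close; have u_gt0 := side_gt0 R s.
have : a ^+ 2 * u < 1.
  rewrite -(ltr_pM2r u_gt0) mul1r; apply: le_lt_trans close.
  by rewrite -mulrA -expr2 -exprMn lerDl sqr_ge0.
by rewrite -(ltr_pM2r (exprn_gt0 s (ltr0Sn R 1))) -mulrA side_mul_exp2 mulr1 mul1r.
Qed.

Lemma close_pair_offsets {i1 j1 i2 j2 : nat} : close_pair R s i1 j1 i2 j2 ->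
  [/\ (i1 <= i2)%N, (j1 <= j2)%N, ((i2 - i1) ^ 2 < 2 ^ s)%N &
      ((j2 - j1) ^ 2 < 2 ^ s)%N].
Proof.
have u_gt0 := side_gt0 R s.
have center_sub k l : (k <= l)%N ->
    (l%:R + 2^-1) * u - (k%:R + 2^-1) * u = (l - k)%N%:R * u :> R.
  by move=> le_kl; rewrite natrB //; ring.
rewrite /close_pair /le2 /dist2 /= !ler_pM2r // !lerD2r !ler_nat.
move=> [[le_i le_j]]; rewrite ltr_sqrt // !center_sub // => close.
split => //; rewrite -(ltr_nat R) !natrX.
- exact: sqr_lt_exp2_of_dist close.
- by apply: (sqr_lt_exp2_of_dist _ (i2 - i1)%:R); rewrite addrC.
Qed.

Definition close_block (i j a b : nat) : set ((R * R) * (R * R)) :=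
  [set x | [/\ (i + a < 2 ^ s)%N, (j + b < 2 ^ s)%N,
              close_pair R s i j (i + a) (j + b) &
              box R s i j x.1 /\ box R s (i + a) (j + b) x.2]].

Lemma close_block_box_pair_or_empty i j a b :
  close_block i j a b = box R s i j `*` box R s (i + a) (j + b) \/
  close_block i j a b = set0.
Proof.
have [[lt_ia lt_jb close]|not_close] :=
  pselect [/\ (i + a < 2 ^ s)%N, (j + b < 2 ^ s)%N & close_pair R s i j (i + a) (j + b)].
  by left; apply/seteqP; split => x /= => [[]|] //.
by right; apply/seteqP; split => x // [*]; apply: not_close.
Qed.

Lemma measurable_close_block i j a b : measurable (close_block i j a b).
Proof.
case: (close_block_box_pair_or_empty i j a b) => ->; last exact: measurable0.
by apply: measurableX; exact: measurable_box.
Qed.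

Lemma vol4_close_block_le i j a b :
  (vol4 R (close_block i j a b) <= (u ^+ 4)%:E)%E.
Proof.
case: (close_block_box_pair_or_empty i j a b) => ->; first by rewrite vol4_box_pair.
by rewrite vol4E measure0 lee_fin exprn_ge0 // ltW // side_gt0.
Qed.

Lemma block_count_volume_le :
  u ^+ 4 *+ (2 ^ s * 2 ^ s * (2 ^ uphalf s * 2 ^ uphalf s)) <= 2 * u.
Proof.
have u_ge0 := ltW (side_gt0 R s).
have offsets_le : ((2 ^ uphalf s * 2 ^ uphalf s)%:R <= 2 * 2 ^+ s :> R).
  by rewrite mulnn -natrX -natrM ler_nat exp2_uphalf_sqr_le.
rewrite -mulr_natr natrM natrM natrX.
rewrite (_ : _ * _ = (u * 2 ^+ s) ^+ 2 * (u ^+ 2 * (2 ^ uphalf s * 2 ^ uphalf s)%:R));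
  last by ring.
rewrite side_mul_exp2 expr1n mul1r.
rewrite (_ : 2 * u = u ^+ 2 * (2 * 2 ^+ s)); last first.
  by rewrite mulrCA expr2 -mulrA side_mul_exp2 mulr1.
by rewrite ler_wpM2l ?exprn_ge0.
Qed.

Lemma B_close_bigsetU : B_close R s =
  \big[setU/set0]_(t : block_index s)
    close_block t.1.1 t.1.2 t.2.1 t.2.2.
Proof.
rewrite -bigcup_seq; apply/seteqP; split => x.
  move=> [i1 [j1 [i2 [j2 [[lt_i1 lt_j1] [lt_i2 lt_j2] close [box1 box2]]]]]].
  have [le_i le_j lt_a lt_b] := close_pair_offsets close.
  exists ((Ordinal lt_i1, Ordinal lt_j1),
          (Ordinal (sqr_lt_exp2_uphalf lt_a), Ordinal (sqr_lt_exp2_uphalf lt_b))).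
    by rewrite /= mem_index_enum.
  by rewrite /close_block /= !subnKC.
move=> [t _ [lt_ia lt_jb close [box1 box2]]].
by exists t.1.1, t.1.2, (t.1.1 + t.2.1)%N, (t.1.2 + t.2.2)%N.
Qed.

End close_pairs.

Theorem lemma4 (R : realType) (s : nat) :
  side R s <= 2^-1 ->
  (vol4 R (B_close R s) <= (4 * pi * side R s)%:E)%E.
Proof.
move=> _.
rewrite B_close_bigsetU vol4E.
apply: le_trans (content_bigsetU_le (lebesgue_measure4 R) _
  (fun t : block_index s => close_block R s t.1.1 t.1.2 t.2.1 t.2.2)
  (fun t => measurable_close_block R s _ _ _ _)) _.
apply: (@le_trans _ _ (\sum_(t : block_index s) (side R s ^+ 4)%:E)%E).
  by apply: lee_sum => t _; exact: vol4_close_block_le.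
rewrite sumEFin sumr_const !card_prod !card_ord lee_fin.
apply: le_trans (block_count_volume_le R s) _.
by rewrite ler_wpM2r ?ltW ?side_gt0 //; have := pi_ge2 R; lra.
Qed.
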